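(* Let $m\ge 1$ be an integer, $N=2m$, and let $x\in[-\pi/2,\pi/2]$. For $j=1,\ldots,2m$ define $\varphi_j=\left(\frac{N-(2j-1)}{N}\right)x$, so that $\varphi_j=-\varphi_{2m+1-j}$. For a function $g:\{1,\ldots,2m\}\to\{+1,-1\}$ satisfying the balanced condition $\sum_{j=1}^{2m} g(j)=0$, put $$\mathbf{S}(g)=\sum_{j=1}^{2m} g(j)\,e^{\imath\varphi_j}.$$ Then, over all such balanced $g$, the maximum of $|\mathbf{S}(g)|$ is attained at the two antisymmetric balanced functions $$g(j)=\begin{cases}1 & 1\le j\le m\\ -1 & m+1\le j\le 2m\end{cases}\qquad\text{and}\qquad g(j)=\begin{cases}-1 & 1\le j\le m\\ 1 & m+1\le j\le 2m.\end{cases}$$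
   Context: Here $\imath$ denotes the imaginary unit. Here $N$ is any even positive integer (not necessarily a power of 2). These two maximizing functions are called the antisymmetric balanced (ASB) functions; they correspond to the bit strings $0\cdots0\,1\cdots1$ and $1\cdots1\,0\cdots0$ (each block of length $m$). *)

From Stdlib Require Import Reals Lra.
From Coquelicot Require Import Coquelicot.
Open Scope R_scope.

Definition expi (t : R) : C := (cos t, sin t).

Definition phi (m : nat) (x : R) (j : nat) : R :=
  ((2 * INR m - (2 * INR j - 1)) / (2 * INR m)) * x.

(* g : {1..2m} -> {+1,-1}, represented as nat -> R constrained on 1..2m *)
Definition pm_one (m : nat) (g : nat -> R) : Prop :=
  forall j, (1 <= j <= 2 * m)%nat -> g j = 1 \/ g j = -1.

Definition balanced (m : nat) (g : nat -> R) : Prop :=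
  sum_n_m g 1 (2 * m) = 0.

Definition S (m : nat) (x : R) (g : nat -> R) : C :=
  sum_n_m (fun j => Cmult (RtoC (g j)) (expi (phi m x j))) 1 (2 * m).

Definition asb1 (m : nat) (j : nat) : R := if (j <=? m)%nat then 1 else -1.
Definition asb2 (m : nat) (j : nat) : R := if (j <=? m)%nat then -1 else 1.

(* Pair the index j with its mirror 2m+1-j, for which phi changes sign.  Writing a = g j and
   b = g (2m+1-j), the pair contributes (a+b) cos phi_j + i (a-b) sin phi_j, and balance lets
   us replace cos phi_j by cos phi_j - 1 in the real part.  Since 1 - cos t <= |sin t| on
   [-pi/2, pi/2] and |a+b| + |a-b| = 2, every balanced g has |S g| <= 2 sum_j |sin phi_j|.
   The antisymmetric functions give S = +-2i sum_j sin phi_j, and all phi_j with j <= m have the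
   sign of x, so they attain this bound. *)
From Stdlib Require Import Reals Lra Lia.
From Coquelicot Require Import Coquelicot.
Open Scope R_scope.

(* Real specialisations of Coquelicot's generic sum lemmas, which are stated with the
   structure operations [plus], [mult], [zero] and in which summands are typed by an
   [AbelianMonoid] sort that [ring] and [rewrite] do not match against [R]. *)
Lemma sum_n_m_ext_loc_R (a b : nat -> R) (n p : nat) :
  (forall k, (n <= k <= p)%nat -> a k = b k) -> sum_n_m a n p = sum_n_m b n p.
Proof. apply sum_n_m_ext_loc. Qed.

Lemma sum_n_m_Rplus (u v : nat -> R) (n p : nat) :
  sum_n_m (fun k => u k + v k) n p = sum_n_m u n p + sum_n_m v n p.
Proof. exact (sum_n_m_plus u v n p). Qed.

Lemma sum_n_m_Rmult_l (c : R) (u : nat -> R) (n p : nat) :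
  sum_n_m (fun k => c * u k) n p = c * sum_n_m u n p.
Proof. exact (sum_n_m_mult_l c u n p). Qed.

Lemma sum_n_m_R0 (n p : nat) : sum_n_m (fun _ => 0) n p = 0.
Proof. exact (sum_n_m_const_zero n p). Qed.

Lemma sum_n_m_opp (f : nat -> R) (n p : nat) :
  sum_n_m (fun k => - f k) n p = - sum_n_m f n p.
Proof.
  replace (- sum_n_m f n p) with (-1 * sum_n_m f n p) by ring.
  rewrite <- sum_n_m_Rmult_l. apply sum_n_m_ext_loc_R; intros; ring.
Qed.

Lemma sum_n_m_le_loc (a b : nat -> R) (n p : nat) :
  (forall k, (n <= k <= p)%nat -> a k <= b k) -> sum_n_m a n p <= sum_n_m b n p.
Proof.
  induction p as [|p IHp]; intros Hab.
  - destruct n as [|n].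
    + rewrite !sum_n_n. apply Hab; lia.
    + rewrite !sum_n_m_zero; [apply Rle_refl | lia | lia].
  - destruct (Nat.le_gt_cases n (Datatypes.S p)) as [Hn|Hn].
    + rewrite !sum_n_Sm by exact Hn.
      apply Rplus_le_compat; [apply IHp; intros k Hk |]; apply Hab; lia.
    + rewrite !sum_n_m_zero; [apply Rle_refl | lia | lia].
Qed.

Lemma sum_n_m_Rabs_nonneg (f : nat -> R) (n p : nat) :
  (forall k, (n <= k <= p)%nat -> 0 <= f k) ->
  sum_n_m (fun k => Rabs (f k)) n p = sum_n_m f n p.
Proof. intros Hf; apply sum_n_m_ext_loc; intros k Hk; apply Rabs_right, Rle_ge, Hf, Hk. Qed.

Lemma Rabs_sum_n_m_le (f : nat -> R) (n p : nat) :
  Rabs (sum_n_m f n p) <= sum_n_m (fun k => Rabs (f k)) n p.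
Proof. exact (norm_sum_n_m f n p). Qed.

Lemma sum_n_m_C (u v : nat -> R) (n p : nat) :
  sum_n_m (fun j => (u j, v j) : C) n p = (sum_n_m u n p, sum_n_m v n p).
Proof.
  induction p as [|p IHp].
  - destruct n as [|n].
    + now rewrite !sum_n_n.
    + rewrite !sum_n_m_zero by lia; reflexivity.
  - destruct (Nat.le_gt_cases n (Datatypes.S p)) as [Hn|Hn].
    + rewrite !sum_n_Sm by exact Hn. now rewrite IHp.
    + rewrite !sum_n_m_zero by lia; reflexivity.
Qed.

Lemma sum_n_m_fold (f : nat -> R) (k n : nat) :
  sum_n_m f (Datatypes.S k) (k + 2 * n) =
  sum_n_m (fun j => f j + f (2 * k + 2 * n + 1 - j)%nat) (Datatypes.S k) (k + n).
Proof.
  revert k; induction n as [|n IHn]; intros k.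
  - rewrite !Nat.add_0_r, !sum_n_m_zero by lia; reflexivity.
  - replace (k + 2 * Datatypes.S n)%nat with (Datatypes.S (Datatypes.S k + 2 * n)) by lia.
    rewrite sum_n_Sm, sum_Sn_m, IHn by lia.
    replace (k + Datatypes.S n)%nat with (Datatypes.S k + n)%nat by lia.
    rewrite (sum_Sn_m _ (Datatypes.S k)) by lia.
    replace (2 * Datatypes.S k + 2 * n + 1)%nat with (2 * k + 2 * Datatypes.S n + 1)%nat by lia.
    replace (2 * k + 2 * Datatypes.S n + 1 - Datatypes.S k)%nat
      with (Datatypes.S (Datatypes.S k + 2 * n)) by lia.
    unfold plus; cbn; ring.
Qed.

Lemma sum_n_m_fold_1 (f : nat -> R) (n : nat) :
  sum_n_m f 1 (2 * n) = sum_n_m (fun j => f j + f (2 * n + 1 - j)%nat) 1 n.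
Proof. exact (sum_n_m_fold f 0 n). Qed.

Lemma phi_reflect (m : nat) (x : R) (j : nat) :
  (j <= 2 * m + 1)%nat -> phi m x (2 * m + 1 - j) = - phi m x j.
Proof.
  intros Hj. unfold phi. rewrite minus_INR, plus_INR, mult_INR by exact Hj.
  cbn [INR]. unfold Rdiv. ring.
Qed.

Lemma phi_opp (m : nat) (x : R) (j : nat) : phi m (- x) j = - phi m x j.
Proof. unfold phi. ring. Qed.

Lemma phi_coef_bounds (m j : nat) :
  (1 <= j <= m)%nat -> 0 <= (2 * INR m - (2 * INR j - 1)) / (2 * INR m) <= 1.
Proof.
  intros Hj.
  assert (Hj1 : 1 <= INR j) by (apply (le_INR 1); lia).
  assert (Hjm : INR j <= INR m) by (apply le_INR; lia).
  split.
  - apply Rdiv_le_0_compat; lra.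
  - apply Rdiv_le_1 with (r2 := 2 * INR m); lra.
Qed.

Lemma phi_in_half_pi (m : nat) (x : R) (j : nat) :
  (1 <= j <= m)%nat -> - (PI / 2) <= x <= PI / 2 -> - (PI / 2) <= phi m x j <= PI / 2.
Proof.
  intros Hj Hx. pose proof (phi_coef_bounds m j Hj). pose proof PI_RGT_0.
  unfold phi. split; nra.
Qed.

Lemma sin_phi_nonneg (m : nat) (x : R) (j : nat) :
  (1 <= j <= m)%nat -> 0 <= x <= PI / 2 -> 0 <= sin (phi m x j).
Proof.
  intros Hj Hx. pose proof (phi_coef_bounds m j Hj). pose proof PI_RGT_0.
  apply sin_ge_0; unfold phi; nra.
Qed.

Lemma one_minus_cos_le_Rabs_sin (t : R) :
  - (PI / 2) <= t <= PI / 2 -> 1 - cos t <= Rabs (sin t).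
Proof.
  intros Ht.
  assert (Hcos : 0 <= cos t <= 1) by (split; [apply cos_ge_0; lra | apply COS_bound]).
  pose proof (sin2_cos2 t) as Hpyth. unfold Rsqr in Hpyth.
  (* (1 - cos t)^2 <= (1 - cos t)(1 + cos t) = sin t ^ 2 *)
  unfold Rabs; destruct (Rcase_abs (sin t)); nra.
Qed.

Lemma Rabs_add_sub_sign (a b : R) :
  (a = 1 \/ a = -1) -> (b = 1 \/ b = -1) -> Rabs (a + b) + Rabs (a - b) = 2.
Proof.
  intros [-> | ->] [-> | ->]; unfold Rabs; repeat destruct (Rcase_abs _); lra.
Qed.

Lemma pair_term_le (a b t : R) :
  (a = 1 \/ a = -1) -> (b = 1 \/ b = -1) -> - (PI / 2) <= t <= PI / 2 ->
  Rabs ((a + b) * (cos t - 1)) + Rabs ((a - b) * sin t) <= 2 * Rabs (sin t).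
Proof.
  intros Ha Hb Ht.
  pose proof (one_minus_cos_le_Rabs_sin t Ht).
  pose proof (Rabs_add_sub_sign a b Ha Hb).
  pose proof (Rabs_pos (a + b)).
  rewrite !Rabs_mult, (Rabs_left1 (cos t - 1)) by (pose proof (COS_bound t); lra).
  nra.
Qed.

Lemma Cmod_le_Rabs_add (u v : R) : Cmod (u, v) <= Rabs u + Rabs v.
Proof.
  replace (u, v) with (RtoC u + Ci * RtoC v)%C
    by (unfold Cplus, Cmult, RtoC, Ci; cbn; f_equal; ring).
  rewrite <- (Cmod_R u), <- (Cmod_R v), <- (Rmult_1_l (Cmod v)), <- Cmod_Ci, <- Cmod_mult.
  apply Cmod_triangle.
Qed.

Lemma Cmod_imag (v : R) : Cmod (0, v) = Rabs v.
Proof.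
  replace (0, v) with (Ci * RtoC v)%C by (unfold Cmult, RtoC, Ci; cbn; f_equal; ring).
  now rewrite Cmod_mult, Cmod_Ci, Cmod_R, Rmult_1_l.
Qed.

Lemma S_folded (m : nat) (x : R) (g : nat -> R) :
  S m x g =
  (sum_n_m (fun j => (g j + g (2 * m + 1 - j)%nat) * cos (phi m x j)) 1 m,
   sum_n_m (fun j => (g j - g (2 * m + 1 - j)%nat) * sin (phi m x j)) 1 m).
Proof.
  unfold S.
  rewrite (sum_n_m_ext _ (fun j => (g j * cos (phi m x j), g j * sin (phi m x j)) : C))
    by (intros; unfold Cmult, RtoC, expi; cbn; f_equal; ring).
  rewrite sum_n_m_C, !sum_n_m_fold_1.
  f_equal; apply sum_n_m_ext_loc_R; intros j Hj.
  all: rewrite phi_reflect by lia; rewrite ?cos_neg, ?sin_neg; ring.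
Qed.

Lemma balanced_folded (m : nat) (g : nat -> R) :
  balanced m g <-> sum_n_m (fun j => g j + g (2 * m + 1 - j)%nat) 1 m = 0.
Proof. unfold balanced. now rewrite sum_n_m_fold_1. Qed.

Lemma Rabs_sum_sin_phi (m : nat) (x : R) :
  - (PI / 2) <= x <= PI / 2 ->
  Rabs (sum_n_m (fun j => sin (phi m x j)) 1 m) =
  sum_n_m (fun j => Rabs (sin (phi m x j))) 1 m.
Proof.
  assert (Hnonneg : forall y, 0 <= y <= PI / 2 ->
    Rabs (sum_n_m (fun j => sin (phi m y j)) 1 m) =
    sum_n_m (fun j => Rabs (sin (phi m y j))) 1 m).
  { intros y Hy.
    assert (Habs : sum_n_m (fun j => Rabs (sin (phi m y j))) 1 m =
                   sum_n_m (fun j => sin (phi m y j)) 1 m)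
      by (apply sum_n_m_Rabs_nonneg; intros j Hj; apply sin_phi_nonneg; assumption).
    rewrite Habs. apply Rabs_right, Rle_ge. rewrite <- Habs.
    eapply Rle_trans; [apply Rabs_pos | apply Rabs_sum_n_m_le]. }
  intros Hx. destruct (Rle_lt_dec 0 x) as [Hx0 | Hx0].
  - apply Hnonneg; lra.
  - rewrite <- (Ropp_involutive x).
    rewrite (sum_n_m_ext _ (fun j => - sin (phi m (- x) j)))
      by (intros; now rewrite phi_opp, sin_neg).
    rewrite (sum_n_m_ext (fun j => Rabs _) (fun j => Rabs (sin (phi m (- x) j))))
      by (intros; now rewrite phi_opp, sin_neg, Rabs_Ropp).
    rewrite sum_n_m_opp, Rabs_Ropp. apply Hnonneg; lra.
Qed.

Lemma Cmod_S_le (m : nat) (x : R) (g : nat -> R) :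
  - (PI / 2) <= x <= PI / 2 -> pm_one m g -> balanced m g ->
  Cmod (S m x g) <= 2 * sum_n_m (fun j => Rabs (sin (phi m x j))) 1 m.
Proof.
  intros Hx Hg Hbal. apply balanced_folded in Hbal.
  rewrite S_folded.
  rewrite (sum_n_m_ext_loc_R _
     (fun j => (g j + g (2 * m + 1 - j)%nat) * (cos (phi m x j) - 1)
               + (g j + g (2 * m + 1 - j)%nat))) by (intros; ring).
  rewrite sum_n_m_Rplus, Hbal, Rplus_0_r.
  eapply Rle_trans; [apply Cmod_le_Rabs_add |].
  eapply Rle_trans; [apply Rplus_le_compat; apply Rabs_sum_n_m_le |].
  rewrite <- sum_n_m_Rplus, <- sum_n_m_Rmult_l.
  apply sum_n_m_le_loc; intros j Hj.
  apply pair_term_le; [apply Hg; lia | apply Hg; lia | now apply phi_in_half_pi].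
Qed.

Definition antisymmetric (m : nat) (g : nat -> R) : Prop :=
  forall j, (1 <= j <= m)%nat -> g (2 * m + 1 - j)%nat = - g j.

Lemma antisymmetric_balanced (m : nat) (g : nat -> R) :
  antisymmetric m g -> balanced m g.
Proof.
  intros Hg. apply balanced_folded. rewrite <- (sum_n_m_R0 1 m).
  apply sum_n_m_ext_loc_R; intros j Hj. rewrite Hg by exact Hj. ring.
Qed.

Lemma S_antisymmetric (m : nat) (x : R) (g : nat -> R) :
  antisymmetric m g -> S m x g = (0, 2 * sum_n_m (fun j => g j * sin (phi m x j)) 1 m).
Proof.
  intros Hg. rewrite S_folded, <- sum_n_m_Rmult_l, <- (sum_n_m_R0 1 m).
  f_equal; apply sum_n_m_ext_loc_R; intros j Hj; rewrite Hg by exact Hj; ring.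
Qed.

Lemma asb1_antisymmetric (m : nat) : antisymmetric m (asb1 m).
Proof.
  intros j Hj. unfold asb1.
  rewrite (proj2 (Nat.leb_le j m)), (proj2 (Nat.leb_gt (2 * m + 1 - j) m)) by lia. ring.
Qed.

Lemma asb2_antisymmetric (m : nat) : antisymmetric m (asb2 m).
Proof.
  intros j Hj. unfold asb2.
  rewrite (proj2 (Nat.leb_le j m)), (proj2 (Nat.leb_gt (2 * m + 1 - j) m)) by lia. ring.
Qed.

Lemma asb1_pm_one (m : nat) : pm_one m (asb1 m).
Proof. intros j _. unfold asb1. destruct (j <=? m)%nat; auto. Qed.

Lemma asb2_pm_one (m : nat) : pm_one m (asb2 m).
Proof. intros j _. unfold asb2. destruct (j <=? m)%nat; auto. Qed.

Lemma Cmod_S_asb1 (m : nat) (x : R) :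
  - (PI / 2) <= x <= PI / 2 ->
  Cmod (S m x (asb1 m)) = 2 * sum_n_m (fun j => Rabs (sin (phi m x j))) 1 m.
Proof.
  intros Hx. rewrite S_antisymmetric by apply asb1_antisymmetric.
  rewrite Cmod_imag, Rabs_mult, Rabs_right, <- Rabs_sum_sin_phi by lra.
  do 2 f_equal. apply sum_n_m_ext_loc_R; intros j Hj.
  unfold asb1. rewrite (proj2 (Nat.leb_le j m)) by lia. ring.
Qed.

Lemma Cmod_S_asb2 (m : nat) (x : R) :
  - (PI / 2) <= x <= PI / 2 ->
  Cmod (S m x (asb2 m)) = 2 * sum_n_m (fun j => Rabs (sin (phi m x j))) 1 m.
Proof.
  intros Hx. rewrite S_antisymmetric by apply asb2_antisymmetric.
  rewrite Cmod_imag, Rabs_mult, Rabs_right, <- Rabs_sum_sin_phi by lra.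
  rewrite (sum_n_m_ext_loc_R _ (fun j => - sin (phi m x j))), sum_n_m_opp, Rabs_Ropp.
  - reflexivity.
  - intros j Hj. unfold asb2. rewrite (proj2 (Nat.leb_le j m)) by lia. ring.
Qed.

Theorem theorem1 (m : nat) (x : R) :
  (1 <= m)%nat -> - (PI / 2) <= x <= PI / 2 ->
  pm_one m (asb1 m) /\ balanced m (asb1 m) /\
  pm_one m (asb2 m) /\ balanced m (asb2 m) /\
  (forall g : nat -> R, pm_one m g -> balanced m g ->
     Cmod (S m x g) <= Cmod (S m x (asb1 m)) /\
     Cmod (S m x g) <= Cmod (S m x (asb2 m))).
Proof.
  intros _ Hx.
  split; [apply asb1_pm_one |].
  split; [apply antisymmetric_balanced, asb1_antisymmetric |].
  split; [apply asb2_pm_one |].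
  split; [apply antisymmetric_balanced, asb2_antisymmetric |].
  intros g Hg Hbal.
  rewrite Cmod_S_asb1, Cmod_S_asb2 by exact Hx.
  split; now apply Cmod_S_le.
Qed.
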